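(* Let $P$ be a graph, let $S$ be as defined below, and let $R=V(P)\setminus(S\cup N(S))$. Assume that the induced subgraph $P[R]$ has no isolated vertices. Then (1) $P[R]$ has a spanning subgraph isomorphic to a disjoint union of edges and odd cycles; and (2) for every vertex $x\in R$, the graph $P[R\setminus\{x\}]$ has a spanning subgraph isomorphic to a disjoint union of edges and odd cycles.
   Context: All graphs are finite, simple and undirected. For $S\subseteq V(P)$, $N(S)=\bigcup_{v\in S}N(v)$ (open neighborhood), $N(\emptyset)=\emptyset$. Let $I(P)$ be the set of isolated vertices of $P$. $S$ is an independent set $S\subseteq V(P)\setminus I(P)$ that maximizes $|S|-|N(S)|$, chosen, among all maximizers, to maximize $|S|$ (possibly $S=\emptyset$). Then $S$, $N(S)$, $R$ partition $V(P)$. *)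

(* A simple graph is a symmetric irreflexive relation e on a finType T. *)
From mathcomp Require Import all_boot all_order all_algebra.
Set Implicit Arguments. Unset Strict Implicit. Unset Printing Implicit Defensive.

Section Graph.
Variables (T : finType) (e : rel T).

Definition nbhd (S : {set T}) : {set T} := [set y | [exists x in S, e x y]].

Definition isolated : {set T} := [set x | [forall y, ~~ e x y]].

Definition independent (S : {set T}) : bool :=
  [forall x in S, forall y in S, ~~ e x y].

Definition admissible (S : {set T}) : bool :=
  independent S && (S \subset ~: isolated).

Definition surplus (S : {set T}) : int := (#|S|%:Z - #|nbhd S|%:Z)%R.

Definition is_special_S (S : {set T}) : Prop :=
  admissible S /\
  forall S' : {set T}, admissible S' ->
    (surplus S' <= surplus S)%R /\ (surplus S' = surplus S -> #|S'| <= #|S|).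

Definition edge_or_odd_cycle (B : {set T}) : Prop :=
  exists s : seq T, [/\ uniq s, B = [set x in s] &
    (exists a b, s = [:: a; b] /\ e a b) \/
    [/\ odd (size s), 3 <= size s & cycle e s]].

(* the induced subgraph on U has a spanning subgraph isomorphic to a disjoint
   union of edges and odd cycles: U is partitioned into blocks, each spanning
   an edge or an odd cycle (the components of the spanning subgraph) *)
Definition has_edge_odd_cycle_cover (U : {set T}) : Prop :=
  exists P : {set {set T}}, partition P U /\
    forall B, B \in P -> edge_or_odd_cycle B.

End Graph.

From mathcomp Require Import all_boot all_order all_algebra zify.
Set Implicit Arguments. Unset Strict Implicit. Unset Printing Implicit Defensive.

(* If some nonempty independent I inside R had |N(I) ∩ R| <= |I|, then S ∪ I
   would be admissible with surplus at least that of S and with more vertices,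
   contradicting the choice of S.  So Hall's condition |A| <= |N(A) ∩ U| holds
   strictly on the independent subsets of U = R, hence non-strictly for
   U = R \ {x}; it extends to all subsets A of U, because the vertices of A with
   a neighbour in A lie in N(A).  Hall's theorem then gives an injection of U
   into itself along edges, i.e. a permutation of U whose cycles follow edges:
   odd cycles are kept as blocks, even cycles (including 2-cycles) are split
   into edges. *)

Section Neighbourhood.
Variables (T : finType) (r : rel T).

Lemma in_nbhd (A : {set T}) y : (y \in nbhd r A) = [exists x in A, r x y].
Proof. by rewrite inE. Qed.

Lemma in_nbhd1 x y : (y \in nbhd r [set x]) = r x y.
Proof.
rewrite in_nbhd; apply/exists_inP/idP => [[z /set1P-> //]|rxy].
by exists x; rewrite ?set11.
Qed.

Lemma nbhdS (A B : {set T}) : A \subset B -> nbhd r A \subset nbhd r B.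
Proof.
move=> /subsetP AB; apply/subsetP => y.
rewrite !in_nbhd => /exists_inP[x xA rxy].
by apply/exists_inP; exists x; rewrite ?AB.
Qed.

Lemma nbhdU (A B : {set T}) : nbhd r (A :|: B) = nbhd r A :|: nbhd r B.
Proof.
apply/setP => y; rewrite in_setU !in_nbhd; apply/exists_inP/orP.
  by case=> x /setUP[xA|xB] rxy; [left|right]; apply/exists_inP; exists x.
by case=> /exists_inP[x xAB rxy]; exists x; rewrite // inE xAB ?orbT.
Qed.

End Neighbourhood.

Lemma card_setD1I (T : finType) (Y B : {set T}) y :
  #|Y :&: B| <= #|(Y :\ y) :&: B|.+1.
Proof. by rewrite setIDAC (cardsD1 y (Y :&: B)) -add1n leq_add2r leq_b1. Qed.

Section Hall.
Variables (T : finType) (r : rel T).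
Implicit Types (X Y A B : {set T}) (f : T -> T).

Definition matching X Y f :=
  {in X &, injective f} /\ {in X, forall x, (f x \in Y) && r x (f x)}.

Definition hall_condition X Y :=
  forall A, A \subset X -> #|A| <= #|Y :&: nbhd r A|.

Lemma matching_set0 Y f : matching set0 Y f.
Proof. by split=> x; rewrite inE. Qed.

Lemma matching_set1 x y : r x y -> matching [set x] [set y] (fun=> y).
Proof.
by move=> rxy; split=> [a b /set1P-> /set1P-> //|a /set1P->]; rewrite set11.
Qed.

Lemma matching_glue X Y1 Y2 A f1 f2 : [disjoint Y1 & Y2] ->
  matching (X :&: A) Y1 f1 -> matching (X :\: A) Y2 f2 ->
  matching X (Y1 :|: Y2) (fun x => if x \in A then f1 x else f2 x).
Proof.
move=> dY [f1_inj f1_map] [f2_inj f2_map].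
have inXA x : x \in X -> x \in A -> x \in X :&: A by rewrite inE => -> ->.
have inXnA x : x \in X -> x \notin A -> x \in X :\: A by rewrite inE => -> ->.
have f1Y x (xX : x \in X) (xA : x \in A) : f1 x \in Y1.
  by case/andP: (f1_map x (inXA x xX xA)).
have f2Y x (xX : x \in X) (xA : x \notin A) : f2 x \in Y2.
  by case/andP: (f2_map x (inXnA x xX xA)).
split=> [x1 x2 x1X x2X | x xX] /=.
  case: ifPn => x1A; case: ifPn => x2A f12.
  - exact: f1_inj (inXA _ x1X x1A) (inXA _ x2X x2A) f12.
  - by have := disjointFr dY (f1Y _ x1X x1A); rewrite f12 f2Y.
  - by have := disjointFr dY (f1Y _ x2X x2A); rewrite -f12 f2Y.
  - exact: f2_inj (inXnA _ x1X x1A) (inXnA _ x2X x2A) f12.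
case: ifPn => xA.
  by case/andP: (f1_map x (inXA x xX xA)) => fY ->; rewrite inE fY.
by case/andP: (f2_map x (inXnA x xX xA)) => fY ->; rewrite inE fY orbT.
Qed.

Lemma hall_condition_critical_in X Y A :
  hall_condition X Y -> A \subset X -> hall_condition A (Y :&: nbhd r A).
Proof.
move=> hallXY AX B BA; rewrite -setIA (setIidPr (nbhdS r BA)).
exact: hallXY (subset_trans BA AX).
Qed.

Lemma hall_condition_critical_out X Y A :
  hall_condition X Y -> A \subset X -> #|Y :&: nbhd r A| <= #|A| ->
  hall_condition (X :\: A) (Y :\: nbhd r A).
Proof.
move=> hallXY AX critA B BXA.
have dBA : [disjoint B & A].
  by rewrite disjoints_subset (subset_trans BXA) ?subsetDr.
have BAX : B :|: A \subset X by rewrite subUset AX (subset_trans BXA) ?subsetDl.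
have := hallXY _ BAX; rewrite cardsU (disjoint_setI0 dBA) cards0 subn0 nbhdU.
have : Y :&: (nbhd r B :|: nbhd r A)
       \subset (Y :&: nbhd r A) :|: (Y :\: nbhd r A) :&: nbhd r B.
  move: (nbhd r A) (nbhd r B) => NA NB; apply/subsetP => y; rewrite !inE.
  by case: (y \in Y); case: (y \in NA); case: (y \in NB).
move/subset_leq_card/leq_trans/(_ (leq_card_setU _ _)); lia.
Qed.

Lemma hall_condition_strict_setD1 X Y y :
  (forall A, A \subset X -> A != set0 -> #|A| < #|Y :&: nbhd r A|) ->
  hall_condition X (Y :\ y).
Proof.
move=> strictXY A AX; have [->|A0] := eqVneq A set0; first by rewrite cards0.
by rewrite -ltnS; apply: leq_trans (strictXY A AX A0) (card_setD1I _ _ _).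
Qed.

Theorem hall_matching X Y : hall_condition X Y -> exists f, matching X Y f.
Proof.
have [n] := ubnP #|X|; elim: n X Y => // n IH X Y ltXn hallXY.
have [->|[x xX]] := set_0Vmem X; first by exists id; apply: matching_set0.
case: (pickP [pred A : {set T} | [&& A \subset X, A != set0, A != X &
                                    #|Y :&: nbhd r A| <= #|A|]]).
  move=> A /and4P[AX A0 AX' critA].
  have ltAX : #|A| < #|X| by rewrite proper_card // properEneq AX' AX.
  have ltXA : #|X :\: A| < #|X| by rewrite cardsDS // -card_gt0 in A0 *; lia.
  have [f1 m1] := IH A (Y :&: nbhd r A) (leq_trans ltAX ltXn)
                     (hall_condition_critical_in hallXY AX).
  have [f2 m2] := IH (X :\: A) (Y :\: nbhd r A) (leq_trans ltXA ltXn)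
                     (hall_condition_critical_out hallXY AX critA).
  exists (fun z => if z \in A then f1 z else f2 z); rewrite -(setID Y (nbhd r A)).
  apply: matching_glue => //; last by rewrite (setIidPr AX).
  by rewrite disjoints_subset setCD (subset_trans (subsetIr _ _) (subsetUr _ _)).
move=> no_crit.
have [y] : exists y, y \in Y :&: nbhd r [set x].
  by apply/card_gt0P; apply: leq_trans (hallXY _ _); rewrite ?cards1 ?sub1set.
case/setIP=> yY; rewrite in_nbhd1 => rxy.
have strict A : A \subset X :\ x -> A != set0 -> #|A| < #|Y :&: nbhd r A|.
  move=> AXx A0; have AX : A \subset X := subset_trans AXx (subsetDl _ _).
  have AnX : A != X.
    by apply: contraTneq AXx => ->; apply/subsetPn; exists x; rewrite ?inE ?eqxx.
  by move/negbT: (no_crit A); rewrite /= AX A0 AnX ltnNge.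
have ltXx : #|X :\ x| < #|X| by rewrite (cardsD1 x X) xX.
have [f2 m2] := IH (X :\ x) (Y :\ y) (leq_trans ltXx ltXn)
                   (hall_condition_strict_setD1 y strict).
exists (fun z => if z \in [set x] then y else f2 z); rewrite -(setD1K yY).
apply: matching_glue; first by rewrite disjoints1 setD11.
  by rewrite (setIidPr _) ?sub1set //; apply: matching_set1.
exact: m2.
Qed.

End Hall.

Section Covers.
Variables (T : finType) (e : rel T).
Hypothesis e_irr : irreflexive e.
Implicit Types (U V B : {set T}) (s : seq T).

Lemma cover_set0 : has_edge_odd_cycle_cover e set0.
Proof. by exists set0; split=> [|B]; rewrite ?partition_set0 ?inE. Qed.

Lemma cover_block B : edge_or_odd_cycle e B -> has_edge_odd_cycle_cover e B.
Proof.
move=> eB; exists [set B]; split=> [|C /set1P-> //].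
rewrite /partition cover1 trivIset1 eqxx in_set1 eq_sym /=.
case: eB => s [_ -> s_shape]; apply/set0Pn.
case: s s_shape => [[[? [? []]] | []] // | a s _].
by exists a; rewrite inE mem_head.
Qed.

Lemma coverU U V : [disjoint U & V] -> has_edge_odd_cycle_cover e U ->
  has_edge_odd_cycle_cover e V -> has_edge_odd_cycle_cover e (U :|: V).
Proof.
move=> dUV [P [/and3P[/eqP covP trivP P0] blP]].
move=> [Q [/and3P[/eqP covQ trivQ Q0] blQ]].
exists (P :|: Q); split=> [|B /setUP[/blP|/blQ] //].
have covPQ : cover (P :|: Q) = U :|: V.
  by rewrite [cover _]bigcup_setU -covP -covQ.
rewrite /partition covPQ eqxx inE negb_or P0 Q0 !andbT /=.
by apply: trivIsetU; rewrite ?covP ?covQ.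
Qed.

Lemma cover_even_path s : uniq s -> ~~ odd (size s) -> sorted e s ->
  has_edge_odd_cycle_cover e [set:: s].
Proof.
have [n] := ubnP (size s); elim: n s => // n IH [|a [|b t]] //= lt_n.
  by rewrite set_nil => *; apply: cover_set0.
rewrite !inE negb_or negbK => /andP[/andP[ab at_] /andP[bt t_uniq]] t_even.
move=> /andP[eab bt_path].
have -> : [set:: [:: a, b & t]] = [set:: [:: a; b]] :|: [set:: t].
  by apply/setP => x; rewrite !inE orbA.
apply: coverU.
- apply/pred0P => x /=; rewrite !inE.
  case: eqP => [->|_]; [|case: eqP => [->|_]] => //.
  - by rewrite (negbTE at_).
  - by rewrite (negbTE bt).
- apply: cover_block; exists [:: a; b]; split; rewrite //= ?inE ?ab //.
  by left; exists a, b.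
- by apply: IH => //; [lia | apply: path_sorted bt_path].
Qed.

Lemma cover_cycle s : uniq s -> cycle e s -> has_edge_odd_cycle_cover e [set:: s].
Proof.
move=> s_uniq s_cycle; have [s_odd|s_even] := boolP (odd (size s)).
  apply: cover_block; exists s; split=> //; right; split=> //.
  by case: s s_cycle s_odd {s_uniq} => [|a [|b [|c t]]] //=; rewrite e_irr.
apply: cover_even_path => //.
by case: s s_cycle {s_uniq s_even} => // a t; rewrite (cycle_path a) => /path_sorted.
Qed.

Lemma cover_of_perm g U : injective g ->
  {in U, forall x, (g x \in U) && e x (g x)} -> has_edge_odd_cycle_cover e U.
Proof.
move=> g_inj; have [n] := ubnP #|U|; elim: n U => // n IH U ltUn gU.
have [->|[u uU]] := set_0Vmem U; first exact: cover_set0.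
set O := [set:: orbit g u].
have inO x : (x \in O) = fconnect g u x by rewrite inE fconnect_orbit.
have OU : O \subset U.
  apply/subsetP => y; rewrite inE => /trajectP[i _ ->].
  by elim: i => //= i /gU/andP[].
have gUO : {in U :\: O, forall x, (g x \in U :\: O) && e x (g x)}.
  move=> x /setDP[xU xO]; have /andP[gxU exg] := gU x xU.
  rewrite in_setD gxU exg !andbT; apply: contra xO.
  rewrite !inO => /connect_trans.
  by apply; rewrite (fconnect_sym g_inj) fconnect1.
rewrite -(setID U O) (setIidPr OU); apply: coverU.
- by rewrite disjoint_sym disjoints_subset subsetDr.
- apply: cover_cycle; first exact: orbit_uniq.
  apply: (sub_in_cycle (P := mem U)) (cycle_orbit g_inj u).
    by move=> x y xU _ /eqP <-; case/andP: (gU x xU).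
  by apply/allP => x xO; apply: (subsetP OU); rewrite inE.
- apply: IH gUO; rewrite cardsDS //.
  have : 0 < #|O| by apply/card_gt0P; exists u; rewrite inO connect0.
  have := subset_leq_card OU; lia.
Qed.

Lemma cover_of_matching f U : matching e U U f -> has_edge_odd_cycle_cover e U.
Proof.
move=> [f_inj f_map]; pose g x := if x \in U then f x else x.
have fU x : x \in U -> f x \in U by move/f_map/andP=> [].
apply: (@cover_of_perm g) => [x y | x xU]; last by rewrite /g xU; apply: f_map.
rewrite /g; case: ifPn => xU; case: ifPn => yU // fxy.
- exact: f_inj.
- by move: (fU x xU); rewrite fxy (negbTE yU).
- by move: (fU y yU); rewrite -fxy (negbTE xU).
Qed.

End Covers.

Section IndependentSets.
Variables (T : finType) (e : rel T).
Hypothesis e_sym : symmetric e.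
Implicit Types (A B I X Y U : {set T}).

Lemma independentP A : reflect {in A &, forall x y, ~~ e x y} (independent e A).
Proof.
apply: (iffP forall_inP) => [indA x y xA yA | indA x xA].
  exact: (forall_inP (indA x xA)).
by apply/forall_inP => y; apply: indA.
Qed.

Lemma disjoint_nbhdC A B : [disjoint A & nbhd e B] -> [disjoint B & nbhd e A].
Proof.
rewrite !disjoints_subset => /subsetP AnNB; apply/subsetP => y yB.
rewrite inE in_nbhd; apply/exists_inP => -[x xA exy].
have := AnNB x xA; rewrite inE in_nbhd => /exists_inP; apply.
by exists y; rewrite // e_sym.
Qed.

Lemma independentU A B : independent e A -> independent e B ->
  [disjoint B & nbhd e A] -> independent e (A :|: B).
Proof.
move=> /independentP indA /independentP indB dBA.
have nAB x y : x \in A -> y \in B -> ~~ e x y.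
  move=> xA yB; apply: contraFN (disjointFr dBA yB) => exy.
  by rewrite in_nbhd; apply/exists_inP; exists x.
apply/independentP => x y /setUP[xA|xB] /setUP[yA|yB].
- exact: indA.
- exact: nAB.
- by rewrite e_sym nAB.
- exact: indB.
Qed.

Lemma admissibleU A B : admissible e A -> admissible e B ->
  [disjoint B & nbhd e A] -> admissible e (A :|: B).
Proof.
case/andP=> indA isoA /andP[indB isoB] dBA.
by rewrite /admissible independentU // subUset isoA.
Qed.

Lemma hall_condition_independent X Y : X \subset Y ->
  (forall I, I \subset X -> independent e I -> #|I| <= #|Y :&: nbhd e I|) ->
  hall_condition e X Y.
Proof.
move=> XY hallI A AX; set A0 := A :\: nbhd e A.
have indA0 : independent e A0.
  apply/independentP => x y /setDP[xA _] /setDP[_ yNA].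
  by apply: contra yNA => exy; rewrite in_nbhd; apply/exists_inP; exists x.
have := hallI A0 (subset_trans (subsetDl _ _) AX) indA0.
have sub : (Y :&: nbhd e A0) :|: (A :&: nbhd e A) \subset Y :&: nbhd e A.
  rewrite subUset setIS ?nbhdS ?subsetDl //= subsetI subsetIr andbT.
  exact: subset_trans (subsetIl _ _) (subset_trans AX XY).
have dis : [disjoint Y :&: nbhd e A0 & A :&: nbhd e A].
  rewrite disjoints_subset; apply/subsetP => y /setIP[_].
  rewrite in_nbhd => /exists_inP[x /setDP[_ xNA] exy].
  rewrite !inE negb_and; apply/orP; left; apply: contra xNA => yA.
  by rewrite in_nbhd; apply/exists_inP; exists y; rewrite // e_sym.
have := subset_leq_card sub; rewrite cardsU (disjoint_setI0 dis) cards0 subn0.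
have := cardsID (nbhd e A) A; rewrite -/A0; lia.
Qed.

Hypothesis e_irr : irreflexive e.

Lemma cover_of_independent_hall U :
  (forall I, I \subset U -> independent e I -> #|I| <= #|U :&: nbhd e I|) ->
  has_edge_odd_cycle_cover e U.
Proof.
move=> /(hall_condition_independent (subxx U))/hall_matching[f].
exact: cover_of_matching.
Qed.

End IndependentSets.

Section SpecialSet.
Variables (T : finType) (e : rel T) (S : {set T}).
Hypotheses (e_sym : symmetric e) (HS : is_special_S e S).
Local Notation R := (~: (S :|: nbhd e S)).

Lemma special_set_expansion (I : {set T}) :
  I \subset R -> I \subset ~: isolated e -> independent e I -> I != set0 ->
  #|I| < #|R :&: nbhd e I|.
Proof.
move=> IR Iiso indI I0; rewrite ltnNge; apply/negP => le_NI.
have [admS maxS] := HS.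
have dI : [disjoint I & S :|: nbhd e S] by rewrite disjoints_subset.
have dIS : [disjoint S & I] by rewrite disjoint_sym (disjointWr (subsetUl _ _) dI).
have dINS : [disjoint I & nbhd e S] := disjointWr (subsetUr _ _) dI.
have dSNI : [disjoint S & nbhd e I] := disjoint_nbhdC e_sym dINS.
have admSI : admissible e (S :|: I).
  by apply: admissibleU => //; rewrite /admissible indI Iiso.
have cardSI : #|S :|: I| = #|S| + #|I|.
  by rewrite cardsU (disjoint_setI0 dIS) cards0 subn0.
have cardN : #|nbhd e (S :|: I)| <= #|nbhd e S| + #|R :&: nbhd e I|.
  rewrite nbhdU; apply: leq_trans (subset_leq_card _) (leq_card_setU _ _).
  apply/subsetP => y /setUP[yNS|yNI]; first by rewrite in_setU yNS.
  rewrite in_setU in_setI in_setC in_setU yNI (disjointFl dSNI yNI) andbT /=.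
  by case: (y \in nbhd e S).
have [le_surplus card_le] := maxS _ admSI.
have eq_surplus : surplus e (S :|: I) = surplus e S.
  by move: le_surplus; rewrite /surplus; lia.
have := card_le eq_surplus; have := I0; rewrite -card_gt0; lia.
Qed.

End SpecialSet.

Theorem lemma2 (T : finType) (e : rel T) (e_sym : symmetric e) (e_irr : irreflexive e)
  (S : {set T}) (HS : is_special_S e S) :
  let R := ~: (S :|: nbhd e S) in
  (forall x, x \in R -> exists2 y, y \in R & e x y) ->
  has_edge_odd_cycle_cover e R /\
  (forall x, x \in R -> has_edge_odd_cycle_cover e (R :\ x)).
Proof.
move=> R R_nonisolated.
have R_iso : R \subset ~: isolated e.
  apply/subsetP => x /R_nonisolated[y _ exy]; rewrite !inE negb_forall.
  by apply/existsP; exists y; rewrite negbK.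
have expand (I : {set T}) (IR : I \subset R) :
    independent e I -> I != set0 -> #|I| < #|R :&: nbhd e I|
  := special_set_expansion e_sym HS IR (subset_trans IR R_iso).
split=> [|x xR]; apply: cover_of_independent_hall => // I IR indI;
  have [->|I0] := eqVneq I set0; rewrite ?cards0 //.
  exact/ltnW/expand.
have IR' : I \subset R := subset_trans IR (subsetDl _ _).
by rewrite -ltnS; apply: leq_trans (expand I IR' indI I0) (card_setD1I _ _ _).
Qed.
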